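(* Let $V$ be a finite-dimensional real vector space and $\mathcal{C} \subset V$ a proper cone. Then \[ \gamma(\mathcal{C}) = \sup_{K \text{ sole of } \mathcal{C}} \gamma_{\mathrm{aff}}(K). \]
   Context: A convex cone $\mathcal{C} \subset V$ is proper if it is closed, salient ($\mathcal{C} \cap (-\mathcal{C}) = \{0\}$) and generating ($\mathcal{C} - \mathcal{C} = V$). Its dual cone is $\mathcal{C}^* = \{f \in V^* : f(x) \geq 0 \text{ for all } x \in \mathcal{C}\}$. A sole of $\mathcal{C}$ is a set $\{x \in \mathcal{C} : f(x) = \alpha\}$ with $f \in \mathrm{int}(\mathcal{C}^* )$ and $\alpha > 0$; it is a convex body in the affine hyperplane $\{f = \alpha\}$. A linear map $\Psi : V \to V$ is $\mathcal{C}$-positive if $\Psi(\mathcal{C}) \subset \mathcal{C}$, strictly $\mathcal{C}$-positive if $\Psi(\mathcal{C}\setminus\{0\}) \subset \mathrm{int}(\mathcal{C})$, and $\mathcal{C}$-primitive if it is $\mathcal{C}$-positive and some power $\Psi^k$ ($k \geq 1$) is strictly $\mathcal{C}$-positive; the smallest such $k$ is $\gamma(\mathcal{C},\Psi)$, and the maximal exponent $\gamma(\mathcal{C})$ is the supremum of $\gamma(\mathcal{C},\Psi)$ over all $\mathcal{C}$-primitive $\Psi$. For a convex body $K$ (compact convex set with nonempty interior) in a finite-dimensional affine space $W$, an affine map $\Phi : W \to W$ is $K$-positive if $\Phi(K) \subset K$, strictly $K$-positive if $\Phi(K) \subset \mathrm{int}(K)$, $K$-primitive if it is $K$-positive and some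 $\Phi^k$ ($k\ge 1$) is strictly $K$-positive; the smallest such $k$ is $\gamma_{\mathrm{aff}}(K,\Phi)$, and $\gamma_{\mathrm{aff}}(K)$ is the supremum of $\gamma_{\mathrm{aff}}(K,\Phi)$ over all $K$-primitive affine maps $\Phi : W \to W$ (with $W$ the affine hyperplane containing the sole). *)

From HB Require Import structures.
From mathcomp Require Import all_boot all_order all_algebra.
From mathcomp Require Import all_classical all_reals all_analysis.
Set Implicit Arguments. Unset Strict Implicit. Unset Printing Implicit Defensive.
Import Order.TTheory GRing.Theory Num.Theory.
Import numFieldNormedType.Exports.
Local Open Scope classical_set_scope.
Local Open Scope ring_scope.

(* V = 'rV[R]_n (a real vector space of dimension n); V^* is represented by
   row vectors f acting through the pairing [pair f, x] = sum_i f_i x_i. *)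

Definition pairing (R : realType) (n : nat) (f x : 'rV[R]_n) : R :=
  \sum_(i < n) f ord0 i * x ord0 i.

Definition convex_cone (R : realType) (n : nat) (C : set 'rV[R]_n) : Prop :=
  C 0 /\ (forall x y, C x -> C y -> C (x + y)) /\
  (forall (t : R) x, 0 <= t -> C x -> C (t *: x)).

Definition proper_cone (R : realType) (n : nat) (C : set 'rV[R]_n) : Prop :=
  [/\ convex_cone C, closed C,
      (forall x, C x -> C (- x) -> x = 0) &
      (forall v, exists x y, [/\ C x, C y & v = x - y])].

Definition dual_cone (R : realType) (n : nat) (C : set 'rV[R]_n) : set 'rV[R]_n :=
  [set f | forall x, C x -> 0 <= pairing f x].

Definition hyperplane (R : realType) (n : nat) (f : 'rV[R]_n) (a : R) : set 'rV[R]_n :=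
  [set x | pairing f x = a].

Definition sole (R : realType) (n : nat) (C : set 'rV[R]_n) (f : 'rV[R]_n) (a : R)
  : set 'rV[R]_n := [set x | C x /\ pairing f x = a].

Definition rel_interior (R : realType) (n : nat) (W K : set 'rV[R]_n) : set 'rV[R]_n :=
  [set x | exists U : set 'rV[R]_n, [/\ open U, U x & U `&` W `<=` K]].

Definition linmap (R : realType) (n : nat) (A : 'M[R]_n) : 'rV[R]_n -> 'rV[R]_n :=
  fun x => x *m A.

Definition C_positive (R : realType) (n : nat) (C : set 'rV[R]_n)
  (P : 'rV[R]_n -> 'rV[R]_n) : Prop := forall x, C x -> C (P x).

Definition C_strictly_positive (R : realType) (n : nat) (C : set 'rV[R]_n)
  (P : 'rV[R]_n -> 'rV[R]_n) : Prop := forall x, C x -> x != 0 -> interior C (P x).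

Definition least_exponent (Q : nat -> Prop) (k : nat) : Prop :=
  [/\ (1 <= k)%N, Q k & forall j, (1 <= j)%N -> Q j -> (k <= j)%N].

Definition gamma_cone (R : realType) (n : nat) (C : set 'rV[R]_n) : \bar R :=
  ereal_sup [set ((k%:R : R)%:E) | k in
    [set k | exists A : 'M[R]_n, C_positive C (linmap A) /\
       least_exponent (fun j => C_strictly_positive C (iter j (linmap A))) k]].

(* affine map x |-> x *m A + b ; affine maps W -> W are exactly the
   restrictions of affine maps of V preserving W *)
Definition affmap (R : realType) (n : nat) (A : 'M[R]_n) (b : 'rV[R]_n)
  : 'rV[R]_n -> 'rV[R]_n := fun x => x *m A + b.

Definition K_positive (R : realType) (n : nat) (K : set 'rV[R]_n)
  (P : 'rV[R]_n -> 'rV[R]_n) : Prop := forall x, K x -> K (P x).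

Definition K_strictly_positive (R : realType) (n : nat) (W K : set 'rV[R]_n)
  (P : 'rV[R]_n -> 'rV[R]_n) : Prop := forall x, K x -> rel_interior W K (P x).

Definition gamma_aff (R : realType) (n : nat) (W K : set 'rV[R]_n) : \bar R :=
  ereal_sup [set ((k%:R : R)%:E) | k in
    [set k | exists (A : 'M[R]_n) (b : 'rV[R]_n),
       [/\ (forall x, W x -> W (affmap A b x)),
           K_positive K (affmap A b) &
           least_exponent (fun j => K_strictly_positive W K (iter j (affmap A b))) k]]].

Definition sup_soles_gamma_aff (R : realType) (n : nat) (C : set 'rV[R]_n) : \bar R :=
  ereal_sup [set g | exists (f : 'rV[R]_n) (a : R),
     [/\ interior (dual_cone C) f, 0 < a &
         g = gamma_aff (hyperplane f a) (sole C f a)]].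

(* Both inequalities come from homogenization.  An affine self-map x |-> xA + b
   of the hyperplane {f = a} extends to the linear map x |-> xA + (f x / a) b;
   since every ray of C \ 0 meets the sole K = C /\ {f = a} exactly once, and the
   rays through the interior of C are those through the relative interior of K,
   the extension is C-primitive with the same exponent.  Conversely, a
   C-primitive Psi has an eigenfunctional f o Psi = l f with f in the interior
   of C^*: maximise the Collatz-Wielandt value l over a compact slice of C^*; by
   primitivity a non-eigenvector could be improved.  Then l^-1 Psi restricts to
   an affine self-map of the sole {f = 1} with the exponent of Psi. *)

From mathcomp Require Import all_boot all_order all_algebra.
From mathcomp Require Import all_classical all_reals all_analysis.
From mathcomp Require Import ring lra.
Set Implicit Arguments. Unset Strict Implicit. Unset Printing Implicit Defensive.
Import Order.TTheory GRing.Theory Num.Theory.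
Import numFieldNormedType.Exports.
Local Open Scope classical_set_scope.
Local Open Scope ring_scope.

Section Pairing.
Variables (R : realType) (n : nat).
Implicit Types (f g x y : 'rV[R]_n) (A : 'M[R]_n).

Lemma pairingE f x : pairing f x = (f *m x^T) ord0 ord0.
Proof. by rewrite /pairing mxE; apply: eq_bigr => i _; rewrite mxE. Qed.

Lemma pairing_mulmxr f x A : pairing f (x *m A) = pairing (f *m A^T) x.
Proof. by rewrite !pairingE trmx_mul mulmxA. Qed.

Lemma pairingC f x : pairing f x = pairing x f.
Proof. by apply: eq_bigr => i _; rewrite mulrC. Qed.

Lemma pairingDr f x y : pairing f (x + y) = pairing f x + pairing f y.
Proof. by rewrite /pairing -big_split; apply: eq_bigr => i _; rewrite mxE mulrDr. Qed.

Lemma pairingZr f (t : R) x : pairing f (t *: x) = t * pairing f x.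
Proof. by rewrite /pairing mulr_sumr; apply: eq_bigr => i _; rewrite mxE mulrCA. Qed.

Lemma pairingNr f x : pairing f (- x) = - pairing f x.
Proof. by rewrite -scaleN1r pairingZr mulN1r. Qed.

Lemma pairingBr f x y : pairing f (x - y) = pairing f x - pairing f y.
Proof. by rewrite pairingDr pairingNr. Qed.

Lemma pairing0r f : pairing f 0 = 0.
Proof. by rewrite -(scale0r (0 : 'rV[R]_n)) pairingZr mul0r. Qed.

Lemma pairingDl f g x : pairing (f + g) x = pairing f x + pairing g x.
Proof. by rewrite pairingC pairingDr -!(pairingC x). Qed.

Lemma pairingZl f (t : R) x : pairing (t *: f) x = t * pairing f x.
Proof. by rewrite pairingC pairingZr pairingC. Qed.

Lemma pairingBl f g x : pairing (f - g) x = pairing f x - pairing g x.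
Proof. by rewrite pairingC pairingBr -!(pairingC x). Qed.

Lemma pairing0l x : pairing 0 x = 0.
Proof. by rewrite pairingC pairing0r. Qed.

Lemma pairing_self_ge0 x : 0 <= pairing x x.
Proof. by apply: sumr_ge0 => i _; rewrite -expr2 sqr_ge0. Qed.

Lemma pairing_self_gt0 x : x != 0 -> 0 < pairing x x.
Proof.
move=> x0; rewrite lt_def pairing_self_ge0 andbT; apply: contra x0 => /eqP x2_0.
apply/eqP/rowP => i; rewrite mxE; apply/eqP; rewrite -(orbb (x ord0 i == 0)) -mulf_eq0.
by apply/eqP; apply: (psumr_eq0P _ x2_0) => // j _; rewrite -expr2 sqr_ge0.
Qed.

Lemma pairing_self_addZ x y (t : R) : pairing (x + t *: y) (x + t *: y) =
  pairing x x + t * (2 * pairing x y + t * pairing y y).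
Proof.
rewrite !(pairingDl, pairingDr, pairingZl, pairingZr) (pairingC y x); ring.
Qed.

Lemma sqr_coord_le_pairing_self x i : x ord0 i ^+ 2 <= pairing x x.
Proof.
rewrite expr2 /pairing (bigD1 i) //= lerDl.
by apply: sumr_ge0 => j _; rewrite -expr2 sqr_ge0.
Qed.

Lemma coord_le_norm x i : `|x ord0 i| <= `|x|.
Proof.
rewrite [leRHS]/Num.Def.normr /= mx_normrE.
exact: (@le_bigmax _ _ _ 0 (fun ij : 'I_1 * 'I_n => `|x ij.1 ij.2|) (ord0, i)).
Qed.

Lemma norm_le_of_coord x (r : R) : 0 <= r -> (forall i, `|x ord0 i| <= r) ->
  `|x| <= r.
Proof.
move=> r0 xr; rewrite [leLHS]/Num.Def.normr /= mx_normrE.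
by apply: bigmax_le => // -[i j] _; rewrite [i]ord1.
Qed.

Lemma pairing_le_norm f x : `|pairing f x| <= n%:R * (`|f| * `|x|).
Proof.
apply: le_trans (ler_norm_sum _ _ _) _.
have -> : n%:R * (`|f| * `|x|) = \sum_(i < n) `|f| * `|x|.
  by rewrite sumr_const card_ord mulr_natl.
apply: ler_sum => i _.
by rewrite normrM ler_pM ?coord_le_norm.
Qed.

Lemma pairing_continuous (T : topologicalType) (u v : T -> 'rV[R]_n) :
  continuous u -> continuous v -> continuous (fun t => pairing (u t) (v t)).
Proof.
move=> cu cv; apply: (@continuous_big _ _ _ _ _ add_continuous) => i _ t.
apply: continuousM.
  exact: (continuous_comp (cu t) (@coord_continuous R 1 n ord0 i (u t))).
exact: (continuous_comp (cv t) (@coord_continuous R 1 n ord0 i (v t))).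
Qed.

Lemma pairingr_continuous f : continuous (pairing f).
Proof.
by apply: (@pairing_continuous _ (fun=> f) id) => t; [exact: cst_continuous | exact: cvg_id].
Qed.

Lemma pairingl_continuous x : continuous (fun g => pairing g x).
Proof.
by apply: (@pairing_continuous _ id (fun=> x)) => t; [exact: cvg_id | exact: cst_continuous].
Qed.

End Pairing.

Section ConeTopology.
Variables (R : realType) (n : nat).
Implicit Types (f g x y z : 'rV[R]_n) (C P : set 'rV[R]_n).

Lemma compact_norm_bounded P (r : R) :
  closed P -> (forall x, P x -> `|x| <= r) -> compact P.
Proof.
move=> clP Pr; apply: bounded_closed_compact clP; rewrite /= /bounded_near.
near=> M => x Px; apply: le_trans (Pr x Px) _.
by near: M; apply: nbhs_pinfty_ge; rewrite num_real.
Unshelve. all: by end_near.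
Qed.

Lemma nbhs_line P z d : nbhs z P ->
  exists2 e : R, 0 < e & forall t : R, `|t| < e -> P (z + t *: d).
Proof.
move=> /nbhs_normP [eps /= eps0 zP].
exists (eps / (`|d| + 1)); first by rewrite divr_gt0 // ltr_wpDl.
move=> t; rewrite ltr_pdivlMr ?ltr_wpDl // => te.
apply: zP; rewrite /= opprD addNKr normrN normrZ.
by apply: le_lt_trans te; rewrite ler_wpM2l // lerDl.
Qed.

Lemma interior_pairing_gt0 P z w : nbhs z P ->
  (forall y, P y -> 0 <= pairing y w) -> w != 0 -> 0 < pairing z w.
Proof.
move=> /(nbhs_line (- w)) [e e0 zP] Pw w0.
have e2 : `|e / 2| < e by rewrite gtr0_norm ?divr_gt0 // ltr_pdivrMr // ltr_pMr // ltr1n.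
have := Pw _ (zP _ e2); rewrite scalerN pairingBl pairingZl subr_ge0.
by apply: lt_le_trans; rewrite mulr_gt0 ?divr_gt0 ?pairing_self_gt0.
Qed.

Lemma cone0 C : convex_cone C -> C 0.
Proof. by case. Qed.

Lemma coneD C x y : convex_cone C -> C x -> C y -> C (x + y).
Proof. by move=> [_ [CD _]]; apply: CD. Qed.

Lemma coneZ C t x : convex_cone C -> 0 <= t -> C x -> C (t *: x).
Proof. by move=> [_ [_ CZ]]; apply: CZ. Qed.

Lemma interior_coneZ C t z : convex_cone C -> 0 < t -> interior C z ->
  interior C (t *: z).
Proof.
move=> cC t0 /nbhs_normP [e /= e0 zC]; suff : nbhs (t *: z) C by [].
apply/(nbhs_normP (t *: z) C); exists (t * e).
  by rewrite /= mulr_gt0.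
move=> y /= yz; rewrite -[y](scalerKV (lt0r_neq0 t0)).
apply: (coneZ cC (ltW t0)); apply: zC => /=.
rewrite -[z](scalerK (lt0r_neq0 t0)) -scalerBr normrZ gtr0_norm ?invr_gt0 //.
by rewrite ltr_pdivrMl.
Qed.

Lemma dual_cone_convex C : convex_cone (dual_cone C).
Proof.
split; first by move=> x _; rewrite pairing0l.
split=> [f g Cf Cg x Cx | t f t0 Cf x Cx].
  by rewrite pairingDl addr_ge0 ?Cf ?Cg.
by rewrite pairingZl mulr_ge0 ?Cf.
Qed.

Lemma dual_cone_closed C : closed (dual_cone C).
Proof.
have -> : dual_cone C = \bigcap_(x in C) [set g | 0 <= pairing g x].
  by apply/seteqP; split => g Cg x Cx; apply: Cg.
apply: closed_bigI => x _.
by have := (continuous_closedP _).1 (@pairingl_continuous _ _ x) _ (@closed_ge _ 0).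
Qed.

Lemma pairing_interior_dual_gt0 C f x : interior (dual_cone C) f ->
  C x -> x != 0 -> 0 < pairing f x.
Proof. by move=> fi Cx x0; apply: interior_pairing_gt0 fi _ x0 => g; apply. Qed.

Lemma pairing_dual_interior_gt0 C g z : dual_cone C g -> g != 0 ->
  interior C z -> 0 < pairing g z.
Proof.
move=> Cg g0 zi; rewrite pairingC; apply: interior_pairing_gt0 zi _ g0 => y Cy.
by rewrite pairingC; apply: Cg.
Qed.

Lemma cone_coercive C f : convex_cone C -> closed C ->
  (forall x, C x -> x != 0 -> 0 < pairing f x) ->
  exists2 m : R, 0 < m & forall x, C x -> m * `|x| <= pairing f x.
Proof.
move=> cC clC fpos.
pose S := [set x | C x /\ `|x| = 1].
have normalize x : C x -> x != 0 -> S (`|x|^-1 *: x).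
  move=> Cx x0; split; first by apply: coneZ; rewrite ?invr_ge0.
  by rewrite normrZ normfV normr_id mulVf ?normr_eq0.
have splitx x : x != 0 -> pairing f x = `|x| * pairing f (`|x|^-1 *: x).
  by move=> x0; rewrite pairingZr mulrA divff ?mul1r ?normr_eq0.
have [[u Su]|S0] := pselect (S !=set0); last first.
  exists 1 => // x Cx; have [->|x0] := eqVneq x 0; first by rewrite normr0 mulr0 pairing0r.
  by exfalso; apply: S0; exists (`|x|^-1 *: x); apply: normalize.
have Scompact : compact S.
  apply: (@compact_norm_bounded _ 1) => [|x [_ ->]] //.
  apply: closedI => //.
  by have := (continuous_closedP _).1 (@norm_continuous R 'rV[R]_n) _ (@closed_eq _ 1).
have [um /set_mem [Cum um1] umin] := compact_EVT_min (ex_intro _ u Su) Scompact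
  (continuous_subspaceT (@pairingr_continuous _ _ f)).
have um0 : um != 0 by rewrite -normr_eq0 um1 oner_neq0.
exists (pairing f um); first exact: fpos.
move=> x Cx; have [->|x0] := eqVneq x 0; first by rewrite normr0 mulr0 pairing0r.
rewrite (splitx x) // mulrC ler_wpM2l //.
exact: umin (mem_set (normalize _ Cx x0)).
Qed.

Lemma interior_dual_cone_of_pos C f : convex_cone C -> closed C ->
  (forall x, C x -> x != 0 -> 0 < pairing f x) -> interior (dual_cone C) f.
Proof.
move=> cC clC fpos; have [m m0 fm] := cone_coercive cC clC fpos.
suff : nbhs f (dual_cone C) by [].
apply/(nbhs_normP f (dual_cone C)); exists (m / (n%:R + 1)).
  by rewrite /= divr_gt0 // ltr_wpDl.
move=> g /= fg x Cx.
have nfg : n%:R * `|f - g| <= m.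
  rewrite ltr_pdivlMr ?ltr_wpDl // in fg.
  by apply: le_trans (ltW fg); rewrite mulrC ler_wpM2l // lerDl.
have := pairing_le_norm (f - g) x; rewrite pairingBl mulrA ler_norml => /andP [_].
have := fm x Cx; have := ler_wpM2r (normr_ge0 x) nfg; lra.
Qed.

Lemma cone_dominated C f g : convex_cone C -> closed C ->
  (forall x, C x -> x != 0 -> 0 < pairing f x) ->
  exists2 eps : R, 0 < eps & forall x, C x -> eps * pairing g x <= pairing f x.
Proof.
move=> cC clC fpos; have [m m0 fm] := cone_coercive cC clC fpos.
have D0 : 0 < n%:R * `|g| + 1 by rewrite ltr_wpDl.
exists (m / (n%:R * `|g| + 1)); first by rewrite divr_gt0.
move=> x Cx; apply: le_trans (fm x Cx); rewrite mulrAC ler_pdivrMr //.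
have := ler_norm (pairing g x); have := pairing_le_norm g x.
have := normr_ge0 x; have := normr_ge0 g; nra.
Qed.

End ConeTopology.

Section Separation.
Variables (R : realType) (n : nat).
Implicit Types (p x y : 'rV[R]_n) (C : set 'rV[R]_n).

Lemma ge0_of_small_perturbations (u w : R) : 0 <= w ->
  (forall t, 0 < t -> t < 1 -> 0 <= u + t * w) -> 0 <= u.
Proof.
move=> w0 uw; rewrite leNgt; apply/negP => u0.
have D0 : 0 < w - u + 1 by lra.
pose t := - u / (w - u + 1).
have tD : t * (w - u + 1) = - u by rewrite mulfVK ?gt_eqF.
have t0 : 0 < t by rewrite divr_gt0 // oppr_gt0.
have t1 : t < 1 by rewrite ltr_pdivrMr // mul1r; lra.
have := mulr_ge0 (uw t t0 t1) (ltW D0); nra.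
Qed.

Lemma closed_nearest_point C p c : closed C -> C c ->
  exists2 xs, C xs & forall y, C y ->
    pairing (xs - p) (xs - p) <= pairing (y - p) (y - p).
Proof.
move=> clC Cc; pose q y := pairing (y - p) (y - p).
have q_cont : continuous q.
  have cB : continuous (fun y : 'rV[R]_n => y - p).
    by move=> y; apply: continuousB; [exact: cvg_id | exact: cst_continuous].
  exact: (pairing_continuous cB cB).
pose D := [set y | C y /\ q y <= q c].
have Dcompact : compact D.
  apply: (@compact_norm_bounded _ _ _ (`|p| + (q c + 1))).
    apply: closedI => //.
    by have := (continuous_closedP _).1 q_cont _ (@closed_le _ (q c)).
  move=> y [_ qy]; apply: norm_le_of_coord => [|i].
    by rewrite addr_ge0 // addr_ge0 ?pairing_self_ge0.
  have yp : `|(y - p) ord0 i| <= q c + 1.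
    have := sqr_coord_le_pairing_self (y - p) i; rewrite -real_normK ?num_real //.
    have := pairing_self_ge0 (c - p); rewrite -/(q c) -/(q y).
    move: (normr_ge0 ((y - p) ord0 i)); nra.
  rewrite -[y](subrK p) mxE; apply: le_trans (ler_normD _ _) _.
  by rewrite addrC lerD ?coord_le_norm.
have [xs /set_mem [Cxs qxs] xs_min] :=
  compact_EVT_min (ex_intro _ c (conj Cc (lexx _))) Dcompact (continuous_subspaceT q_cont).
exists xs => // y Cy; have [qy|/ltW qy] := leP (q y) (q c).
  exact: xs_min (mem_set (conj Cy qy)).
exact: le_trans qxs qy.
Qed.

Lemma cone_separation C p : convex_cone C -> closed C -> ~ C p ->
  exists2 d, dual_cone C d & pairing d p < 0.
Proof.
move=> cC clC Cp.
have [xs Cxs xs_min] := closed_nearest_point p clC (cone0 cC).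
pose d := xs - p.
have d_dir c : (forall t : R, 0 < t -> t < 1 -> C (xs + t *: c)) -> 0 <= pairing d c.
  move=> Cc; rewrite -(pmulr_rge0 _ (ltr0n R 2)).
  apply: (ge0_of_small_perturbations (pairing_self_ge0 c)) => t t0 t1.
  have := xs_min _ (Cc t t0 t1); rewrite addrAC pairing_self_addZ -/d.
  rewrite -subr_ge0 => H; rewrite -(pmulr_rge0 _ t0); lra.
exists d.
  move=> c Cc; apply: d_dir => t t0 _.
  by apply: coneD cC Cxs (coneZ cC (ltW t0) Cc).
have dxs : 0 <= pairing d (- xs).
  apply: d_dir => t t0 t1; rewrite scalerN -{1}[xs]scale1r -scalerBl.
  by apply: coneZ => //; lra.
have d0 : d != 0.
  by apply/eqP => /eqP; rewrite subr_eq0 => /eqP xsp; apply: Cp; rewrite -xsp.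
have := pairing_self_gt0 d0.
rewrite pairingNr in dxs; rewrite {2}/d pairingBr; lra.
Qed.

Lemma proper_cone_neq0 C : (0 < n)%N -> proper_cone C -> exists2 x, C x & x != 0.
Proof.
move=> n0 [_ _ _ gen].
have [x [y [Cx Cy v_xy]]] := gen (const_mx 1).
have [x0|] := eqVneq x 0; last by exists x.
exists y => //; apply: contraPneq v_xy => ->.
by rewrite x0 subr0 => /rowP /(_ (Ordinal n0)) /eqP; rewrite !mxE oner_eq0.
Qed.

Lemma dual_proper_cone_neq0 C : (0 < n)%N -> proper_cone C ->
  exists2 g, dual_cone C g & g != 0.
Proof.
move=> n0 pC; have [x Cx x0] := proper_cone_neq0 n0 pC; case: pC => cC clC sal _.
have Cnx : ~ C (- x) by move=> /(sal x Cx) /eqP; apply/negP.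
have [g Cg gx] := cone_separation cC clC Cnx.
by exists g => //; apply: contraTneq gx => ->; rewrite pairing0l ltxx.
Qed.

End Separation.

Lemma iter_linmap (R : realType) (n : nat) (A : 'M[R]_n) j x :
  iter j (linmap A) x = x *m A ^+ j.
Proof.
by elim: j => [|j IH] /=; rewrite ?mulmx1 // IH /linmap -mulmxA mulmxE -exprSr.
Qed.

Lemma strictly_positive_iter_scaleE (R : realType) (n : nat) (C : set 'rV[R]_n)
    (A : 'M[R]_n) (c : R) j : convex_cone C -> 0 < c ->
  C_strictly_positive C (iter j (linmap (c *: A))) <->
  C_strictly_positive C (iter j (linmap A)).
Proof.
move=> cC c0; have cj0 : 0 < c ^+ j by rewrite exprn_gt0.
have iterZ x : iter j (linmap (c *: A)) x = c ^+ j *: iter j (linmap A) x.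
  elim: (j) => [|i IH] /=; first by rewrite scale1r.
  by rewrite IH /linmap -scalemxAl -scalemxAr scalerA exprS mulrC.
split=> Apos x Cx x0; have := Apos x Cx x0; rewrite iterZ.
  rewrite -{2}[iter _ _ _](scalerK (lt0r_neq0 cj0)).
  by apply: interior_coneZ; rewrite ?invr_gt0.
exact: interior_coneZ.
Qed.

Lemma least_exponent_iff (Q Q' : nat -> Prop) k :
  (forall j, Q j <-> Q' j) -> least_exponent Q k -> least_exponent Q' k.
Proof. by move=> QQ' [k1 /QQ' Qk kmin]; split=> // j j1 /QQ'; apply: kmin. Qed.

Section Homogenization.
Variables (R : realType) (n : nat) (C : set 'rV[R]_n) (f : 'rV[R]_n) (a : R).
Hypotheses (coneC : convex_cone C) (f_int : interior (dual_cone C) f) (a_gt0 : 0 < a).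
Implicit Types (x y z b : 'rV[R]_n) (A : 'M[R]_n).

Local Notation W := (hyperplane f a).
Local Notation K := (sole C f a).

Definition homogenization A b : 'M[R]_n := A + a^-1 *: (f^T *m b).

Lemma linmap_homogenization A b x :
  linmap (homogenization A b) x = x *m A + (pairing f x / a) *: b.
Proof.
rewrite /linmap /homogenization mulmxDr -scalemxAr mulmxA [x *m f^T]mx11_scalar.
by rewrite mul_scalar_mx scalerA pairingC pairingE mulrC.
Qed.

Lemma cone_sole_decomp x : C x -> x != 0 ->
  exists t y, [/\ 0 < t, K y & x = t *: y].
Proof.
move=> Cx x0; have fx0 := pairing_interior_dual_gt0 f_int Cx x0.
exists (pairing f x / a), ((a / pairing f x) *: x); split.
- by rewrite divr_gt0.
- by split; [apply: coneZ; rewrite ?divr_ge0 ?ltW | rewrite /= pairingZr mulfVK ?gt_eqF].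
- by rewrite scalerA mulrA divfK ?gt_eqF // divff ?gt_eqF // scale1r.
Qed.

Lemma interior_rel_interior_sole z : interior C z -> rel_interior W K z.
Proof.
move=> zi; exists (interior C); split => //; first exact: open_interior.
by move=> y [/interior_subset Cy Wy].
Qed.

(* The radial projection x |-> (a / f x) x onto the hyperplane is continuous at
   t z, so near t z every point lies on a ray through U /\ W, which is in K. *)
Lemma interior_of_rel_interior_sole z t : W z -> rel_interior W K z -> 0 < t ->
  interior C (t *: z).
Proof.
move=> Wz [U [oU Uz UK]] t0.
have ftz : pairing f (t *: z) = t * a by rewrite pairingZr Wz.
pose proj x := (a / pairing f x) *: x.
have proj_tz : proj (t *: z) = z.
  rewrite /proj ftz scalerA -[RHS]scale1r; congr (_ *: _).
  by field; rewrite !gt_eqF.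
have proj_cont : {for t *: z, continuous proj}.
  apply: continuousZ; last exact: cvg_id.
  apply: continuousM; first exact: cst_continuous.
  by apply: continuousV; [rewrite ftz mulf_neq0 ?gt_eqF | exact: pairingr_continuous].
have near_U : \forall x \near t *: z, U (proj x).
  by apply: proj_cont; rewrite proj_tz; apply: open_nbhs_nbhs.
have near_pos : \forall x \near t *: z, 0 < pairing f x.
  have : nbhs (pairing f (t *: z)) [set r : R | 0 < r].
    by apply: open_nbhs_nbhs; split; [exact: open_gt | rewrite /= ftz mulr_gt0].
  exact: (@pairingr_continuous _ _ f (t *: z)).
apply: filterS2 near_U near_pos => x Ux fx0.
have Wproj : W (proj x) by rewrite /hyperplane /= pairingZr mulfVK ?gt_eqF.
have [Cproj _] := UK _ (conj Ux Wproj).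
rewrite -[x](scalerK (lt0r_neq0 (divr_gt0 a_gt0 fx0))).
by apply: coneZ Cproj; rewrite ?invr_ge0 ?divr_ge0 ?ltW.
Qed.

Section AffineMap.
Variables (A : 'M[R]_n) (b : 'rV[R]_n).
Hypothesis A_W : forall x, W x -> W (affmap A b x).

Lemma iter_affmap_hyperplane j y : W y -> W (iter j (affmap A b) y).
Proof. by move=> Wy; elim: j => //= j; apply: A_W. Qed.

Lemma iter_homogenization j t y : W y ->
  iter j (linmap (homogenization A b)) (t *: y) = t *: iter j (affmap A b) y.
Proof.
move=> Wy; elim: j => //= j ->.
rewrite linmap_homogenization pairingZr (iter_affmap_hyperplane j Wy).
by rewrite mulfK ?gt_eqF // scalerDr scalemxAl.
Qed.

Lemma strictly_positive_homogenizationE j :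
  C_strictly_positive C (iter j (linmap (homogenization A b))) <->
  K_strictly_positive W K (iter j (affmap A b)).
Proof.
split=> [Hpos x [Cx Wx] | Hpos x Cx x0].
  have x0 : x != 0.
    by apply: contraPneq Wx => ->; rewrite pairing0r => /eqP; rewrite eq_sym gt_eqF.
  apply: interior_rel_interior_sole.
  by have := Hpos x Cx x0; rewrite -[x]scale1r iter_homogenization // !scale1r.
have [t [y [t0 [Cy Wy] ->]]] := cone_sole_decomp Cx x0.
rewrite iter_homogenization //; apply: interior_of_rel_interior_sole t0 => //.
  exact: iter_affmap_hyperplane.
by apply: Hpos.
Qed.

Lemma positive_homogenization : K_positive K (affmap A b) ->
  C_positive C (linmap (homogenization A b)).
Proof.
move=> A_K x Cx; have [->|x0] := eqVneq x 0.
  by rewrite /linmap mul0mx; apply: cone0.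
have [t [y [t0 Ky ->]]] := cone_sole_decomp Cx x0; have [Cy Wy] := Ky.
have := iter_homogenization 1 t Wy; rewrite /= => ->.
by apply: coneZ; rewrite ?ltW //; case: (A_K y Ky).
Qed.

End AffineMap.

Lemma gamma_aff_sole_le_gamma_cone : (gamma_aff W K <= gamma_cone C)%E.
Proof.
apply: ereal_sup_le => _ [k [A [b [A_W A_K A_exp]]] <-].
exists k => //; exists (homogenization A b); split.
  exact: positive_homogenization.
by apply: least_exponent_iff A_exp => j; rewrite strictly_positive_homogenizationE.
Qed.

Lemma exponent_le_gamma_aff_sole A (l : R) k : 0 < l ->
  (forall x, pairing f (x *m A) = l * pairing f x) ->
  C_positive C (linmap A) ->
  least_exponent (fun j => C_strictly_positive C (iter j (linmap A))) k ->
  ((k%:R : R)%:E <= gamma_aff W K)%E.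
Proof.
move=> l0 f_eig A_pos A_exp; apply: ereal_sup_ubound; exists k => //.
pose B := l^-1 *: A.
have B_W : forall x, W x -> W (affmap B 0 x).
  move=> x; rewrite /hyperplane /affmap /= addr0 -scalemxAr pairingZr f_eig => ->.
  by rewrite mulKf ?gt_eqF.
exists B, 0; split => //.
  move=> x [Cx Wx]; split; last exact: B_W.
  by rewrite /affmap addr0 -scalemxAr; apply: coneZ (A_pos _ Cx); rewrite ?invr_ge0 ?ltW.
apply: least_exponent_iff A_exp => j.
rewrite -strictly_positive_homogenizationE // /homogenization mulmx0 scaler0 addr0.
by rewrite strictly_positive_iter_scaleE // invr_gt0.
Qed.

End Homogenization.

Section DualEigenvector.
Variables (R : realType) (n : nat) (C : set 'rV[R]_n) (A : 'M[R]_n) (k : nat).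
Hypotheses (coneC : convex_cone C) (closedC : closed C).
Hypothesis A_pos : C_positive C (linmap A).
Hypothesis k_gt0 : (0 < k)%N.
Hypothesis Ak_strict : C_strictly_positive C (iter k (linmap A)).
Variables (x0 g0 : 'rV[R]_n).
Hypotheses (Cx0 : C x0) (x0_neq0 : x0 != 0).
Hypotheses (g0_dual : dual_cone C g0) (g0_neq0 : g0 != 0).
Implicit Types (g h x : 'rV[R]_n).

Let cone_mulmx_exp j x : C x -> C (x *m A ^+ j).
Proof. by move=> Cx; rewrite -iter_linmap; elim: j => //= j IH; apply: A_pos. Qed.

Let interior_mulmx_exp x : C x -> x != 0 -> interior C (x *m A ^+ k).
Proof. by rewrite -iter_linmap; apply: Ak_strict. Qed.

Let e := x0 *m A ^+ k.
Let e_int : interior C e := interior_mulmx_exp Cx0 x0_neq0.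

Let slice := [set g | dual_cone C g /\ pairing g e = 1].
Let subeigen g (mu : R) := forall x, C x -> mu * pairing g x <= pairing g (x *m A).

Let slice_normalize g : dual_cone C g -> g != 0 -> slice ((pairing g e)^-1 *: g).
Proof.
move=> Cg gn0; have ge0 := pairing_dual_interior_gt0 Cg gn0 e_int.
split; last by rewrite pairingZl mulVf ?gt_eqF.
by apply: (coneZ (@dual_cone_convex _ _ C)) Cg; rewrite invr_ge0 ltW.
Qed.

Let subeigenZ g mu (c : R) : 0 <= c -> subeigen g mu -> subeigen (c *: g) mu.
Proof. by move=> c0 gmu x Cx; rewrite !pairingZl mulrCA ler_wpM2l ?gmu. Qed.

Let slice_bounded : exists r : R, forall g, slice g -> `|g| <= r.
Proof.
have e_pos g : dual_cone C g -> g != 0 -> 0 < pairing e g.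
  by move=> Cg gn0; rewrite pairingC; apply: pairing_dual_interior_gt0 Cg gn0 e_int.
have [m m0 me] :=
  cone_coercive (@dual_cone_convex _ _ C) (@dual_cone_closed _ _ C) e_pos.
exists m^-1 => g [Cg ge]; rewrite -(ler_pM2l m0) mulfV ?gt_eqF //.
by rewrite -ge pairingC me.
Qed.

Let slice_compact : compact slice.
Proof.
have [r gr] := slice_bounded; apply: compact_norm_bounded gr.
apply: closedI; first exact: dual_cone_closed.
by have := (continuous_closedP _).1 (@pairingl_continuous _ _ e) _ (@closed_eq _ 1).
Qed.

Let subeigen_bounded : exists M : R, forall g mu, slice g -> subeigen g mu -> mu <= M.
Proof.
have [r gr] := slice_bounded; exists (n%:R * (r * `|e *m A|)) => g mu Sg gmu.
have [_ ge] := Sg; have := gmu e (interior_subset e_int); rewrite ge mulr1 => le_mu.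
apply: le_trans le_mu (le_trans (ler_norm _) (le_trans (pairing_le_norm _ _) _)).
by rewrite ler_wpM2l // ler_wpM2r ?gr.
Qed.

Let subeigen_closed : closed [set p : 'rV[R]_n * R | subeigen p.1 p.2].
Proof.
have -> : [set p : 'rV[R]_n * R | subeigen p.1 p.2] = \bigcap_(x in C)
    [set p | 0 <= pairing p.1 (x *m A) - p.2 * pairing p.1 x].
  by apply/seteqP; split=> p p_sub x Cx; have := p_sub x Cx; rewrite /= subr_ge0.
have fst_cont : continuous (@fst 'rV[R]_n R) by move=> p; exact: cvg_fst.
have snd_cont : continuous (@snd 'rV[R]_n R) by move=> p; exact: cvg_snd.
apply: closed_bigI => x _.
have F_cont : continuous (fun p : 'rV[R]_n * R =>
    pairing p.1 (x *m A) - p.2 * pairing p.1 x).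
  move=> p; apply: (@continuousB _ R^o _
    (fun q : 'rV[R]_n * R => pairing q.1 (x *m A))
    (fun q : 'rV[R]_n * R => q.2 * pairing q.1 x)).
    by have := pairing_continuous fst_cont (@cst_continuous _ _ (x *m A)); apply.
  apply: continuousM; first exact: snd_cont.
  by have := pairing_continuous fst_cont (@cst_continuous _ _ x); apply.
by have := (continuous_closedP _).1 F_cont _ (@closed_ge _ 0).
Qed.

(* Primitivity makes h A^k, with h = g A^T - mu g in C^* \ 0, strictly positive
   on C \ 0, so it dominates a small multiple of g A^k. *)
Let subeigen_improve g mu : slice g -> subeigen g mu -> g *m A^T != mu *: g ->
  exists g' (eps : R), [/\ slice g', 0 < eps & subeigen g' (mu + eps)].
Proof.
move=> [Cg ge] gmu not_eig; pose h := g *m A^T - mu *: g.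
have hE x : pairing h x = pairing g (x *m A) - mu * pairing g x.
  by rewrite pairingBl pairing_mulmxr pairingZl.
have Ch : dual_cone C h by move=> x Cx; rewrite hE subr_ge0 gmu.
have h0 : h != 0 by rewrite subr_eq0.
have hAk_pos x : C x -> x != 0 -> 0 < pairing (h *m (A ^+ k)^T) x.
  move=> Cx xn0; rewrite -pairing_mulmxr.
  exact: pairing_dual_interior_gt0 Ch h0 (interior_mulmx_exp Cx xn0).
pose g' := g *m (A ^+ k)^T.
have [eps eps0 eps_le] := cone_dominated g' coneC closedC hAk_pos.
have g'_sub : subeigen g' (mu + eps).
  have commA : A *m A ^+ k = A ^+ k *m A by rewrite mulmxE -exprS exprSr.
  move=> x Cx; have := eps_le x Cx.
  by rewrite -!pairing_mulmxr hE -!mulmxA commA; lra.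
have Cg' : dual_cone C g'.
  by move=> x Cx; rewrite -pairing_mulmxr; apply: Cg; apply: cone_mulmx_exp.
have g'_neq0 : g' != 0.
  apply: contra_neq (oner_neq0 R) => g'0.
  by rewrite -ge /e pairing_mulmxr -/g' g'0 pairing0l.
exists ((pairing g' e)^-1 *: g'), eps; split => //; first exact: slice_normalize.
apply: subeigenZ g'_sub; rewrite invr_ge0 ltW //.
exact: pairing_dual_interior_gt0 Cg' g'_neq0 e_int.
Qed.

(* Collatz--Wielandt: maximise mu over the subeigenpairs (g, mu) with g in the
   slice; the cap M only serves to make this set compact. *)
Let exists_slice_eigenvector : exists g mu, [/\ slice g, 0 <= mu &
  forall x, pairing g (x *m A) = mu * pairing g x].
Proof.
have [M Mbound] := subeigen_bounded.
pose T := (slice `*` `[0, M]%classic) `&` [set p | subeigen p.1 p.2].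
have T_compact : compact T.
  apply: compact_closedI subeigen_closed.
  by apply: compact_setX => //; exact: segment_compact.
have T_pair g mu : slice g -> 0 <= mu -> subeigen g mu -> T (g, mu).
  by move=> Sg mu0 gmu; split=> //; split=> //=; rewrite in_itv /= mu0 (Mbound _ _ Sg gmu).
have T_ne : T !=set0.
  have S_g0 := slice_normalize g0_dual g0_neq0.
  exists ((pairing g0 e)^-1 *: g0, 0); apply: T_pair => // x Cx.
  by rewrite mul0r; apply: S_g0.1; apply: A_pos.
have snd_cont : continuous (@snd 'rV[R]_n R) by move=> p; exact: cvg_snd.
have [[g mu] /set_mem [[Sg mu_itv] g_sub] mu_max] :=
  compact_EVT_max T_ne T_compact (continuous_subspaceT snd_cont).
move: mu_itv; rewrite /= in_itv /= => /andP [mu0 _].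
exists g, mu; split => //.
have [g_eig|not_eig] := eqVneq (g *m A^T) (mu *: g).
  by move=> x; rewrite pairing_mulmxr g_eig pairingZl.
have [g' [eps [Sg' eps0 g'_sub]]] := subeigen_improve Sg g_sub not_eig.
have := mu_max _ (mem_set (T_pair _ _ Sg' (addr_ge0 mu0 (ltW eps0)) g'_sub)).
by rewrite /=; lra.
Qed.

Lemma dual_eigenvector : exists f (l : R), [/\ interior (dual_cone C) f, 0 < l &
  forall x, pairing f (x *m A) = l * pairing f x].
Proof.
have [g [mu [[Cg ge] mu0 g_eig]]] := exists_slice_eigenvector.
have g_neq0 : g != 0.
  by apply: contraPneq ge => ->; rewrite pairing0l => /eqP; rewrite eq_sym oner_eq0.
have g_exp x : pairing g (x *m A ^+ k) = mu ^+ k * pairing g x.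
  elim: (k) x => [|j IH] x; first by rewrite mulmx1 mul1r.
  by rewrite [A ^+ _.+1]exprSr -mulmxE mulmxA g_eig IH mulrA -exprS.
have g_pos x : C x -> x != 0 -> 0 < mu ^+ k * pairing g x.
  move=> Cx xn0; rewrite -g_exp.
  exact: pairing_dual_interior_gt0 Cg g_neq0 (interior_mulmx_exp Cx xn0).
have mu_gt0 : 0 < mu.
  rewrite lt_def mu0 andbT; apply: contraTneq (g_pos _ Cx0 x0_neq0) => ->.
  by rewrite expr0n gtn_eqF // mul0r ltxx.
exists g, mu; split => //.
apply: interior_dual_cone_of_pos coneC closedC _ => x Cx xn0.
by have := g_pos x Cx xn0; rewrite pmulr_rgt0 // exprn_gt0.
Qed.

End DualEigenvector.

Theorem proposition2 (R : realType) (n : nat) (C : set 'rV[R]_n) :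
  (0 < n)%N -> proper_cone C ->
  gamma_cone C = sup_soles_gamma_aff C.
Proof.
move=> n0 pC; have [coneC closedC _ _] := pC.
apply/eqP; rewrite eq_le; apply/andP; split.
  apply: ge_ereal_sup => _ [k [A [A_pos A_exp]] <-].
  have [k_gt0 Ak_strict _] := A_exp.
  have [x0 Cx0 x0_neq0] := proper_cone_neq0 n0 pC.
  have [g0 g0_dual g0_neq0] := dual_proper_cone_neq0 n0 pC.
  have [f [l [f_int l_gt0 f_eig]]] := dual_eigenvector coneC closedC A_pos
    k_gt0 Ak_strict Cx0 x0_neq0 g0_dual g0_neq0.
  apply: le_trans
    (exponent_le_gamma_aff_sole coneC f_int ltr01 l_gt0 f_eig A_pos A_exp) _.
  by apply: ereal_sup_ubound; exists f, 1.
apply: ge_ereal_sup => _ [f [a [f_int a_gt0 ->]]].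
exact: gamma_aff_sole_le_gamma_cone.
Qed.
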